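(* Let $V$ be a finite-dimensional real vector space with a non-degenerate symmetric bilinear form $\langle\cdot,\cdot\rangle$, and let $J:V\to V$ be linear, self-adjoint with respect to $\langle\cdot,\cdot\rangle$, with $J^2=-\operatorname{id}$. Let $V_+\subset V$ be a subspace on which $g:=\langle\cdot,\cdot\rangle|_{V_+}$ is positive definite, such that $V=V_+\oplus JV_+$ and $V_+\perp JV_+$. Let $T:V_+\to V_+$ be linear and set $\tilde V_+:=\{v+JTv: v\in V_+\}$. Then: (1) $\tilde V_+\perp J\tilde V_+$ if and only if $T$ is skew-adjoint with respect to $g$; (2) the restriction of $\langle\cdot,\cdot\rangle$ to $\tilde V_+$ is positive definite if and only if $|T|<1$, where $|T|$ denotes the operator norm of $T$ with respect to $g$. *)

From HB Require Import structures.
From mathcomp Require Import all_boot all_order all_algebra.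
From mathcomp Require Import classical_sets reals.
Set Implicit Arguments. Unset Strict Implicit. Unset Printing Implicit Defensive.
Import Order.TTheory GRing.Theory Num.Theory.
Local Open Scope ring_scope.
Local Open Scope classical_set_scope.

Definition graph_vec (R : realType) (V : vectType R) (Vp : {vspace V})
  (J : 'End(V)) (T : 'End(subvs_of Vp)) (v : subvs_of Vp) : V :=
  vsval v + J (vsval (T v)).

Definition opnorm (R : realType) (V : vectType R) (b : V -> V -> R)
  (Vp : {vspace V}) (T : 'End(subvs_of Vp)) : R :=
  sup [set Num.sqrt (b (vsval (T v)) (vsval (T v))) |
        v in [set v : subvs_of Vp | b (vsval v) (vsval v) <= 1]].

From HB Require Import structures.
From mathcomp Require Import all_boot all_order all_algebra.
From mathcomp Require Import classical_sets reals ring lra zify.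
Set Implicit Arguments. Unset Strict Implicit. Unset Printing Implicit Defensive.
Import Order.TTheory GRing.Theory Num.Theory.
Local Open Scope ring_scope.

(* Expanding b(v + JTv, J(w + JTw)) and b(v + JTv, v + JTv) with V_+ ⊥ JV_+,
   J self-adjoint and J^2 = -1 leaves -g(v,Tw) - g(Tv,w) and g(v,v) - g(Tv,Tv).
   The first gives (1). For (2), the restriction to the graph is positive
   definite iff g(Tv,Tv) < g(v,v) for v != 0; by finite dimensionality the
   positive definite form g - g(T.,T.) dominates a multiple of g, which makes
   this strict pointwise inequality a uniform one, i.e. |T| < 1. Domination
   of a quadratic form by a positive definite one is proved by induction on
   the dimension, splitting off a line orthogonal for the definite form. *)

Section SymmetricBilinearForm.
Variables (R : realFieldType) (W : vectType R) (F : W -> W -> R).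
Hypothesis F_linl : forall (a : R) (u u' v : W), F (a *: u + u') v = a * F u v + F u' v.
Hypothesis F_sym : forall u v, F u v = F v u.

Lemma form0l v : F 0 v = 0.
Proof. have := F_linl 1 0 0 v; rewrite scale1r addr0 mul1r; lra. Qed.

Lemma formDl u u' v : F (u + u') v = F u v + F u' v.
Proof. by rewrite -[u in LHS]scale1r F_linl mul1r. Qed.

Lemma formZl a u v : F (a *: u) v = a * F u v.
Proof. by rewrite -[_ *: u]addr0 F_linl form0l addr0. Qed.

Lemma formNl u v : F (- u) v = - F u v.
Proof. by rewrite -scaleN1r formZl mulN1r. Qed.

Lemma formDr u v v' : F u (v + v') = F u v + F u v'.
Proof. by rewrite F_sym formDl !(F_sym _ u). Qed.

Lemma formZr a u v : F u (a *: v) = a * F u v.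
Proof. by rewrite F_sym formZl F_sym. Qed.

Lemma formNr u v : F u (- v) = - F u v.
Proof. by rewrite F_sym formNl F_sym. Qed.

Lemma form_posdef_ge0 : (forall v, v != 0 -> 0 < F v v) -> forall v, 0 <= F v v.
Proof. by move=> F_pos v; have [->|/F_pos/ltW //] := eqVneq v 0; rewrite form0l. Qed.

Lemma form_diagD_le : (forall v, 0 <= F v v) ->
  forall u w, F (u + w) (u + w) <= 2 * F u u + 2 * F w w.
Proof.
move=> F_psd u w; have := F_psd (u - w).
rewrite !(formDl, formDr, formNl, formNr) (F_sym w u); lra.
Qed.

End SymmetricBilinearForm.

Section Domination.
Variables (R : realFieldType) (W : vectType R) (A B : W -> W -> R).
Hypothesis A_linl : forall (a : R) (u u' v : W), A (a *: u + u') v = a * A u v + A u' v.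
Hypothesis A_sym : forall u v, A u v = A v u.
Hypothesis A_pos : forall v, v != 0 -> 0 < A v v.
Hypothesis B_linl : forall (a : R) (u u' v : W), B (a *: u + u') v = a * B u v + B u' v.
Hypothesis B_sym : forall u v, B u v = B v u.
Hypothesis B_psd : forall v, 0 <= B v v.

Definition orth_proj (e v : W) : W := v - (A v e / A e e) *: e.

Lemma orth_proj_linear e : linear (orth_proj e).
Proof.
move=> a u v; rewrite /orth_proj A_linl mulrDl scalerDl scalerBr !scalerA -!mulrA.
by rewrite opprD addrACA.
Qed.

HB.instance Definition _ (e : W) :=
  GRing.isLinear.Build R W W *:%R (orth_proj e) (orth_proj_linear e).

Lemma orth_proj_orth e v : e != 0 -> A (orth_proj e v) e = 0.
Proof.
move=> /A_pos/gt_eqF Aee; rewrite /orth_proj formDl // formNl // formZl //.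
by rewrite mulfVK ?Aee // subrr.
Qed.

Lemma dimv_orth_proj_lt (U : {vspace W}) e : e \in U -> e != 0 ->
  (\dim (linfun (orth_proj e) @: U) < \dim U)%N.
Proof.
move=> eU e0; rewrite -(limg_ker_dim (linfun (orth_proj e)) U).
have e_ker : e \in lker (linfun (orth_proj e)).
  by rewrite memv_ker lfunE /= /orth_proj divff ?gt_eqF ?A_pos // scale1r subrr.
have : (0 < \dim (U :&: lker (linfun (orth_proj e))))%N.
  apply: leq_trans (dimvS (_ : <[e]> <= _)%VS); first by rewrite dim_vline e0.
  by rewrite -memvE memv_cap eU e_ker.
lia.
Qed.

Lemma form_dominated_on_dim n (U : {vspace W}) : (\dim U <= n)%N ->
  exists K, 0 <= K /\ {in U, forall v, B v v <= K * A v v}.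
Proof.
elim: n U => [|n IH] U dimU.
  exists 0; split => // v; move: dimU; rewrite leqn0 dimv_eq0 => /eqP ->.
  by rewrite memv0 => /eqP ->; rewrite form0l // mul0r.
have [->|U0] := eqVneq U 0%VS.
  by exists 0; split => // v; rewrite memv0 => /eqP ->; rewrite form0l // mul0r.
set e := vpick U; have e0 : e != 0 by rewrite vpick0.
have Aee := A_pos e0.
set P := linfun (orth_proj e).
have [K [K_ge0 HK]] : exists K, 0 <= K /\ {in (P @: U)%VS, forall v, B v v <= K * A v v}.
  by apply: IH; rewrite -ltnS (leq_trans _ dimU) // dimv_orth_proj_lt ?memv_pick.
pose d := B e e / A e e.
have d_ge0 : 0 <= d by rewrite divr_ge0 // ltW.
have Bee : B e e = d * A e e by rewrite mulfVK // gt_eqF.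
exists (2 * (K + d)); split; first lra.
move=> v vU.
have uPU : orth_proj e v \in (P @: U)%VS by have := memv_img P vU; rewrite lfunE.
have vE : v = orth_proj e v + (A v e / A e e) *: e by rewrite subrK.
move: (orth_proj e v) (A v e / A e e) uPU (orth_proj_orth v e0) vE => u t uPU Aue vE.
have Avv : A v v = A u u + t ^+ 2 * A e e.
  rewrite vE formDl // !formDr // !formZl // !formZr // (A_sym e u) Aue; ring.
have Bvv : B v v <= 2 * B u u + 2 * (t ^+ 2 * B e e).
  have -> : t ^+ 2 * B e e = B (t *: e) (t *: e).
    by rewrite formZl // formZr // mulrA -expr2.
  by rewrite vE form_diagD_le.
have Buu := HK u uPU; have Auu := form_posdef_ge0 A_linl A_pos u.
have te_ge0 : 0 <= t ^+ 2 * A e e by rewrite mulr_ge0 ?sqr_ge0 ?ltW.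
rewrite Avv; rewrite Bee in Bvv; nra.
Qed.

Lemma form_dominated : exists K, 0 <= K /\ forall v, B v v <= K * A v v.
Proof.
have [K [K_ge0 HK]] := @form_dominated_on_dim _ fullv (leqnn _).
by exists K; split => // v; apply: HK; rewrite memvf.
Qed.

End Domination.

Section RelativeNorm.
Local Open Scope classical_set_scope.
Variables (R : realType) (W : vectType R) (A B : W -> W -> R).
Hypothesis A_linl : forall (a : R) (u u' v : W), A (a *: u + u') v = a * A u v + A u' v.
Hypothesis A_sym : forall u v, A u v = A v u.
Hypothesis A_pos : forall v, v != 0 -> 0 < A v v.
Hypothesis B_linl : forall (a : R) (u u' v : W), B (a *: u + u') v = a * B u v + B u' v.
Hypothesis B_sym : forall u v, B u v = B v u.
Hypothesis B_psd : forall v, 0 <= B v v.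

Definition rel_norm : R := sup [set Num.sqrt (B v v) | v in [set v | A v v <= 1]].

Lemma rel_norm_set_neq0 : [set Num.sqrt (B v v) | v in [set v | A v v <= 1]] !=set0.
Proof. by exists (Num.sqrt (B 0 0)), 0 => //=; rewrite form0l. Qed.

Lemma rel_norm_ub v : A v v <= 1 -> Num.sqrt (B v v) <= rel_norm.
Proof.
move=> Av; apply: sup_upper_bound; last by exists v.
split; first exact: rel_norm_set_neq0.
have [K [K_ge0 HK]] := form_dominated A_linl A_sym A_pos B_linl B_sym B_psd.
exists (Num.sqrt K) => _ [w /= Aw <-]; rewrite ler_sqrt //.
by apply: le_trans (HK w) _; rewrite ler_piMr.
Qed.

Lemma rel_norm_lt1 : rel_norm < 1 <-> forall v, v != 0 -> B v v < A v v.
Proof.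
split=> [lt1 v v0 | B_lt].
  have Av := A_pos v0; pose s := Num.sqrt (A v v).
  have s_gt0 : 0 < s by rewrite sqrtr_gt0.
  have s2 : s ^+ 2 = A v v by rewrite sqr_sqrtr // ltW.
  have Aw : A (s^-1 *: v) (s^-1 *: v) = 1.
    by rewrite formZl // formZr // -s2; field; rewrite gt_eqF.
  have w_ub : Num.sqrt (B (s^-1 *: v) (s^-1 *: v)) <= rel_norm.
    by apply: rel_norm_ub; rewrite Aw.
  have := le_lt_trans w_ub lt1.
  rewrite -sqrtr1 ltr_sqrt ?ltr01 // formZl // formZr // mulrA -expr2 exprVn.
  by rewrite s2 ltr_pdivrMl // mulr1.
pose D u v := A u v - B u v.
have D_linl a u u' v : D (a *: u + u') v = a * D u v + D u' v.
  by rewrite /D A_linl B_linl; ring.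
have D_sym u v : D u v = D v u by rewrite /D A_sym B_sym.
have D_pos v : v != 0 -> 0 < D v v by move/B_lt; rewrite subr_gt0.
have [K [K_ge0 HK]] := form_dominated D_linl D_sym D_pos A_linl A_sym
  (form_posdef_ge0 A_linl A_pos).
have K1 : 0 < K + 1 by lra.
apply: (@le_lt_trans _ _ (Num.sqrt (K / (K + 1)))).
  apply: ge_sup; first exact: rel_norm_set_neq0.
  move=> _ [v /= Av <-]; rewrite ler_sqrt ?divr_ge0 ?ler_pdivlMr //; last lra.
  have KA : K * A v v <= K * 1 := ler_wpM2l K_ge0 Av.
  have := HK v; have := form_posdef_ge0 D_linl D_pos v; rewrite /D; nra.
by rewrite -[X in _ < X]sqrtr1 ltr_sqrt ?ltr01 // ltr_pdivrMr //; lra.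
Qed.

End RelativeNorm.

Section GraphSpace.
Variables (R : realType) (V : vectType R) (b : V -> V -> R).
Hypothesis b_linl : forall (a : R) (u u' v : V), b (a *: u + u') v = a * b u v + b u' v.
Hypothesis b_sym : forall u v, b u v = b v u.
Variable J : 'End(V).
Hypothesis J_selfadj : forall u v, b (J u) v = b u (J v).
Hypothesis J_sq : forall v, J (J v) = - v.
Variable Vp : {vspace V}.
Hypothesis Vp_pos : forall v, v \in Vp -> v != 0 -> 0 < b v v.
Hypothesis Vp_perp : forall u w, u \in Vp -> w \in Vp -> b u (J w) = 0.
Variable T : 'End(subvs_of Vp).

Definition subform (v w : subvs_of Vp) : R := b (vsval v) (vsval w).

Lemma subform_linl a u u' v : subform (a *: u + u') v = a * subform u v + subform u' v.
Proof. by rewrite /subform linearP b_linl. Qed.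

Lemma subform_sym u v : subform u v = subform v u.
Proof. exact: b_sym. Qed.

Lemma subform_pos v : v != 0 -> 0 < subform v v.
Proof. by move=> v0; apply: Vp_pos; rewrite ?subvsP ?subvs_eq0. Qed.

Lemma graph_vec_perp v w : b (graph_vec J T v) (J (graph_vec J T w)) =
  - b (vsval v) (vsval (T w)) - b (vsval (T v)) (vsval w).
Proof.
rewrite /graph_vec linearD /= J_sq !(formDl, formDr, formNr) //.
rewrite Vp_perp ?subvsP // J_selfadj J_sq formNr // (b_sym (J _)).
rewrite Vp_perp ?subvsP //; lra.
Qed.

Lemma graph_vec_quad v : b (graph_vec J T v) (graph_vec J T v) =
  subform v v - subform (T v) (T v).
Proof.
rewrite /graph_vec /subform !(formDl, formDr) //.
rewrite Vp_perp ?subvsP // (b_sym (J _)) Vp_perp ?subvsP //.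
rewrite J_selfadj J_sq formNr //; lra.
Qed.

Lemma graph_vec_eq0 v : (graph_vec J T v == 0) = (v == 0).
Proof.
apply/eqP/eqP => [gv0 | ->]; last by rewrite /graph_vec !linear0 addr0.
have : b (graph_vec J T v) (vsval v) = subform v v.
  by rewrite /graph_vec formDl // (b_sym (J _)) Vp_perp ?subvsP // addr0.
rewrite gv0 form0l // => /esym gv.
by have [//|/subform_pos] := eqVneq v 0; rewrite gv ltxx.
Qed.

End GraphSpace.

Arguments subform {R V} b {Vp} v w.

Theorem lemma9 (R : realType) (V : vectType R) (b : V -> V -> R)
  (b_linl : forall (a : R) (u u' v : V), b (a *: u + u') v = a * b u v + b u' v)
  (b_sym : forall u v : V, b u v = b v u)
  (b_nondeg : forall u : V, (forall v : V, b u v = 0) -> u = 0)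
  (J : 'End(V))
  (J_selfadj : forall u v : V, b (J u) v = b u (J v))
  (J_sq : forall v : V, J (J v) = - v)
  (Vp : {vspace V})
  (Vp_posdef : forall v : V, v \in Vp -> v != 0 -> 0 < b v v)
  (Vp_sum : (Vp + (J @: Vp))%VS = fullv)
  (Vp_direct : directv (Vp + (J @: Vp)))
  (Vp_perp : forall u w : V, u \in Vp -> w \in Vp -> b u (J w) = 0)
  (T : 'End(subvs_of Vp)) :
  ((forall v w : subvs_of Vp,
       b (graph_vec J T v) (J (graph_vec J T w)) = 0) <->
   (forall v w : subvs_of Vp,
       b (vsval (T v)) (vsval w) = - b (vsval v) (vsval (T w))))
  /\
  ((forall v : subvs_of Vp, graph_vec J T v != 0 ->
       0 < b (graph_vec J T v) (graph_vec J T v)) <->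
   opnorm b T < 1).
Proof.
have perp := graph_vec_perp b_linl b_sym J_selfadj J_sq Vp_perp T.
have quad := graph_vec_quad b_linl b_sym J_selfadj J_sq Vp_perp T.
have eq0 := graph_vec_eq0 b_linl b_sym Vp_posdef Vp_perp T.
split.
  by split=> H v w; have := H v w; rewrite perp; lra.
have g_linl := subform_linl (Vp := Vp) b_linl.
have g_sym := subform_sym (Vp := Vp) b_sym.
have g_pos := subform_pos Vp_posdef.
have gT_linl a u u' v : subform b (T (a *: u + u')) (T v) =
    a * subform b (T u) (T v) + subform b (T u') (T v).
  by rewrite linearP g_linl.
have gT_ge0 v := form_posdef_ge0 g_linl g_pos (T v).
have -> : opnorm b T = rel_norm (subform b) (fun v w => subform b (T v) (T w)) by [].
rewrite (rel_norm_lt1 g_linl g_sym g_pos gT_linl (fun u v => g_sym (T u) (T v)) gT_ge0).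
split=> H v; first by rewrite -eq0 => /H; rewrite quad subr_gt0.
by rewrite eq0 quad subr_gt0; apply: H.
Qed.
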